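(* With the notation of the context, for every $\rho\in(-1,1)$ we have $D\le p\le G$ and $$V_D(x_0,s_0,\lambda)\le V(x_0,s_0,\lambda)\le V_G(x_0,s_0,\lambda).$$
   Context: Fix $T>0$, $r,\nu,\mu,x_0\in\mathbb R$, $\eta>0$, $\sigma>0$, $\rho\in(-1,1)$, $s_0>0$, $\lambda>0$, $\gamma>0$; $N$ is a standard Gaussian random variable; $W$ is the Lambert function (inverse of $x\in(-1,\infty)\mapsto xe^x$). Let $\theta=\lambda\gamma(1-\rho^2)$, $w=W\left(s_0\eta^2Te^{(\nu-\eta\rho\frac{\mu-r}{\sigma}-\frac{\eta^2}{2})T}\theta\right)$, $$D=\frac{\lambda e^{-rT}}{\theta\eta^2T}w\left(1+\frac w2\right),\qquad G=\frac{\lambda e^{-rT}}{\theta}\frac{w}{\eta^2T}\left(e^{\frac{\eta^2}{2}T}+\frac w2\right).$$ The asking reservation price of $\lambda$ units of the non-traded stock and the associated value function are $$p=-\frac{e^{-rT}}{\gamma(1-\rho^2)}\ln\mathbb E\exp\left(-\theta s_0e^{(\nu-\eta\rho\frac{\mu-r}{\sigma}-\frac{\eta^2}{2})T}e^{\eta\sqrt TN}\right),\qquad V(x_0,s_0,\lambda)=-\frac1\gamma\exp\left(-\gamma e^{rT}(x_0+p)-\frac{(\mu-r)^2}{2\sigma^2}T\right),$$ (model: non-traded $dS=S(\nu dt+\eta dZ)$, traded $dP=P(\mu dt+\sigma dB)$, correlation $\rho$, bond rate $r$, utility $-\frac1\gamma e^{-\gamma x}$), and for $X\in\{D,G\}$,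 $$V_X(x_0,s_0,\lambda)=-\frac1\gamma\exp\left(-\gamma e^{rT}(x_0+X)-\frac{(\mu-r)^2}{2\sigma^2}T\right).$$ *)

From HB Require Import structures.
From mathcomp Require Import all_boot all_order all_algebra.
From mathcomp Require Import all_classical all_reals all_analysis.
Set Implicit Arguments. Unset Strict Implicit. Unset Printing Implicit Defensive.
Import Order.TTheory GRing.Theory Num.Theory.
Import numFieldNormedType.Exports.
Local Open Scope classical_set_scope.
Local Open Scope ring_scope.

Section Defs.
Variable R : realType.

(* Lambert function W : inverse of x \in (-1, oo) |-> x e^x
   (used only at positive arguments, where the preimage is unique). *)
Definition LambertW (y : R) : R :=
  xget 0 [set w : R | -1 < w /\ w * expR w = y].

Definition std_gauss_expect (f : R -> R) : R :=
  fine (\int[normal_prob (0:R) 1]_x (f x)%:E)%E.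

Definition drift (nu eta rho mu r sigma : R) : R :=
  nu - eta * rho * ((mu - r) / sigma) - eta ^+ 2 / 2.

Definition theta (lambda gamma rho : R) : R := lambda * gamma * (1 - rho ^+ 2).

Definition w_Lambert (T r nu mu eta sigma rho s0 lambda gamma : R) : R :=
  LambertW (s0 * eta ^+ 2 * T * expR (drift nu eta rho mu r sigma * T)
            * theta lambda gamma rho).

Definition D_bound (T r nu mu eta sigma rho s0 lambda gamma : R) : R :=
  let w := w_Lambert T r nu mu eta sigma rho s0 lambda gamma in
  lambda * expR (- r * T) / (theta lambda gamma rho * eta ^+ 2 * T)
    * w * (1 + w / 2).

Definition G_bound (T r nu mu eta sigma rho s0 lambda gamma : R) : R :=
  let w := w_Lambert T r nu mu eta sigma rho s0 lambda gamma in
  lambda * expR (- r * T) / theta lambda gamma rho * (w / (eta ^+ 2 * T))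
    * (expR (eta ^+ 2 / 2 * T) + w / 2).

Definition price (T r nu mu eta sigma rho s0 lambda gamma : R) : R :=
  - (expR (- r * T) / (gamma * (1 - rho ^+ 2)))
  * ln (std_gauss_expect (fun x =>
          expR (- (theta lambda gamma rho * s0
                   * expR (drift nu eta rho mu r sigma * T)
                   * expR (eta * Num.sqrt T * x))))).

Definition value_fun (T r mu sigma gamma x0 X : R) : R :=
  - (1 / gamma) * expR (- gamma * expR (r * T) * (x0 + X)
                        - (mu - r) ^+ 2 / (2 * sigma ^+ 2) * T).

End Defs.

From HB Require Import structures.
From mathcomp Require Import all_boot all_order all_algebra.
From mathcomp Require Import all_classical all_reals all_analysis.
From mathcomp Require Import measurable_realfun charge ring lra.
Import Order.TTheory GRing.Theory Num.Theory.
Import numFieldNormedType.Exports.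
Local Open Scope ring_scope.

(* Write c := theta s0 e^{drift T} and s := eta sqrt T. Then p = -K ln L with
   K := e^{-rT} / (gamma (1 - rho^2)) and L := E[exp(-c e^{sN})], the Laplace
   transform of a lognormal variable.  If w e^w = c s^2, a := w / s^2 and
   t := w / s, then D = K a (1 + w/2) and G = K a (e^{s^2/2} + w/2), so the
   theorem amounts to  e^{-a (e^{s^2/2} + w/2)} <= L <= e^{-a (1 + w/2)}.
   Upper bound: the tangent of exp at w gives c e^{sx} = a e^{w + sx}
   >= a (1 + w) + t x, hence L <= e^{-a (1 + w)} E[e^{-tN}].
   Lower bound: under the law tilted by e^{-tN}, y := N + t is standard
   Gaussian and L = e^{-t^2/2} E~[exp(-(a e^{sy} - t y))], so Jensen's
   inequality gives the bound.  To use only Gaussian integrals of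
   exponentials, t y is replaced by the smaller t (1 - e^{-eps y}) / eps and
   eps -> 0.  The value functions are increasing in the cash amount. *)

Section normal_expectation.
Context {R : realType}.
Local Notation mu := (@lebesgue_measure R).
Local Notation P := (@normal_prob R 0 1).

Lemma ge0_integral_normal_prob (m s : R) (f : R -> R) :
  (forall x, 0 <= f x) -> measurable_fun setT f ->
  (\int[normal_prob m s]_x (f x)%:E =
   \int[mu]_x ((f x)%:E * (normal_pdf m s x)%:E))%E.
Proof.
move=> f0 mf; have nd := @normal_prob_dominates R m s.
rewrite -(Radon_Nikodym_SigmaFinite.change_of_variables nd)//; last first.
  exact/measurable_EFinP.
have intf := Radon_Nikodym_SigmaFinite.f_integrable nd.
have mpdf : measurable_fun setT (EFin \o normal_pdf m s).
  by apply/measurable_EFinP; exact: measurable_normal_pdf.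
apply: ae_eq_integral => //.
- by apply: emeasurable_funM; [apply/measurable_EFinP | exact: measurable_int intf].
- by apply: emeasurable_funM => //; apply/measurable_EFinP.
apply: ae_eqe_mul2l; apply: integral_ae_eq => // E _ mE.
by rewrite -(Radon_Nikodym_SigmaFinite.f_integral nd).
Qed.

Lemma integral_normal_prob_expR_affine (k b : R) :
  (\int[P]_x (expR (k + b * x))%:E = (expR (k + b ^+ 2 / 2))%:E)%E.
Proof.
rewrite ge0_integral_normal_prob; last 2 first.
- by move=> x; exact: expR_ge0.
- by apply: measurableT_comp => //; apply: measurable_funD => //; exact: measurable_funM.
(* completing the square: e^{k + bx} is e^{k + b^2/2} times the N(b, 1) density *)
transitivity (\int[mu]_x ((expR (k + b ^+ 2 / 2))%:E * (normal_pdf b 1 x)%:E))%E.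
  apply: eq_integral => x _; rewrite -!EFinM; congr EFin.
  rewrite /normal_pdf oner_eq0 /= /normal_fun mulrCA -expRD mulrCA -expRD.
  by congr (_ * expR _); rewrite expr1n; field.
rewrite ge0_integralZl ?integral_normal_pdf ?mule1//.
- by apply/measurable_EFinP; exact: measurable_normal_pdf.
- by move=> x _; rewrite lee_fin normal_pdf_ge0.
Qed.

Lemma std_gauss_integrable_expR_affine (k0 k b : R) :
  P.-integrable setT (EFin \o (fun x => k0 * expR (k + b * x))).
Proof.
have ie : P.-integrable setT (EFin \o (fun x => expR (k + b * x))).
  apply/integrableP; split.
    apply/measurable_EFinP; apply: measurableT_comp => //.
    by apply: measurable_funD => //; exact: measurable_funM.
  under eq_integral do rewrite /= ger0_norm ?expR_ge0//.
  by rewrite integral_normal_prob_expR_affine ltry.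
have -> : EFin \o (fun x => k0 * expR (k + b * x)) =
    (fun x => k0%:E * (EFin \o (fun x => expR (k + b * x))) x)%E.
  by apply/funext => x; rewrite /= EFinM.
exact: integrableZl.
Qed.

Lemma std_gauss_expect_expR_affine (k0 k b : R) :
  std_gauss_expect (fun x => k0 * expR (k + b * x)) = k0 * expR (k + b ^+ 2 / 2).
Proof.
have ie : P.-integrable setT (EFin \o (fun x => expR (k + b * x))).
  apply: eq_integrable (std_gauss_integrable_expR_affine 1 k b) => //.
  by move=> x _; rewrite /= mul1r.
rewrite [LHS](@RintegralZl _ _ _ P setT (fun x => expR (k + b * x)))//.
by rewrite /Rintegral integral_normal_prob_expR_affine.
Qed.

Lemma le_std_gauss_expect {f g : R -> R} :
  P.-integrable setT (EFin \o f) -> P.-integrable setT (EFin \o g) ->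
  (forall x, f x <= g x) -> std_gauss_expect f <= std_gauss_expect g.
Proof. by move=> fi gi fg; exact: le_Rintegral. Qed.

Lemma std_gauss_expectB {f g : R -> R} :
  P.-integrable setT (EFin \o f) -> P.-integrable setT (EFin \o g) ->
  std_gauss_expect (fun x => f x - g x) = std_gauss_expect f - std_gauss_expect g.
Proof. by move=> fi gi; exact: RintegralB. Qed.

Lemma std_gauss_integrableB {f g : R -> R} :
  P.-integrable setT (EFin \o f) -> P.-integrable setT (EFin \o g) ->
  P.-integrable setT (EFin \o (fun x => f x - g x)).
Proof. exact: integrableB. Qed.

End normal_expectation.

Lemma expR_tangent_le {R : realType} (u v : R) : expR v * (1 + (u - v)) <= expR u.
Proof.
rewrite -[X in _ <= expR X](subrK v) expRD mulrC.
by apply: ler_wpM2r; [exact: expR_ge0 | exact: expR_ge1Dx].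
Qed.

Lemma le_of_forall_subM_le {R : realFieldType} (x y C : R) :
  (forall e, 0 < e -> e <= 1 -> x - C * e <= y) -> x <= y.
Proof.
move=> small_le; apply/ler_addgt0Pr => d d_gt0.
pose e := Num.min 1 (d / (`|C| + 1)).
have C1_gt0 : 0 < `|C| + 1 by rewrite ltr_wpDl.
have e_gt0 : 0 < e by rewrite lt_min ltr01 divr_gt0.
have e_le1 : e <= 1 by rewrite ge_min lexx.
have e_le : e <= d / (`|C| + 1) by rewrite ge_min lexx orbT.
have Ce_le : C * e <= d.
  have : C * e <= `|C| * e by apply: ler_wpM2r; [exact: ltW | exact: ler_norm].
  have : `|C| * e <= `|C| * (d / (`|C| + 1)) by apply: ler_wpM2l.
  have : `|C| * (d / (`|C| + 1)) <= d.
    by rewrite mulrA ler_pdivrMr // mulrDr mulr1 mulrC lerDl ltW.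
  lra.
by have := small_le e e_gt0 e_le1; lra.
Qed.

Definition lognormal_laplace {R : realType} (c s : R) : R :=
  std_gauss_expect (fun x => expR (- (c * expR (s * x)))).

Section lognormal_laplace_bounds.
Context {R : realType} {c s w : R}.
Hypotheses (s_gt0 : 0 < s) (w_ge0 : 0 <= w) (wexpw : w * expR w = c * s ^+ 2).
Local Notation P := (@normal_prob R 0 1).
Local Notation a := (w / s ^+ 2).
Local Notation t := (w / s).
Local Notation M := (a * expR (s ^+ 2 / 2)).

Let s_neq0 : s != 0. Proof. exact: lt0r_neq0. Qed.

Let a_ge0 : 0 <= a. Proof. by rewrite divr_ge0 // exprn_ge0 // ltW. Qed.

Let t_ge0 : 0 <= t. Proof. by rewrite divr_ge0 // ltW. Qed.

Let c_eq : c = a * expR w.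
Proof. by apply: (mulIf (expf_neq0 2 s_neq0)); rewrite -wexpw; field. Qed.

Lemma lognormal_laplace_integrable :
  P.-integrable setT (EFin \o (fun x => expR (- (c * expR (s * x))))).
Proof.
apply: (le_integrable measurableT _ _
  (finite_measure_integrable_cst P 1 measurableT)).
  apply/measurable_EFinP; do 2 apply: measurableT_comp => //.
  by apply: measurable_funM => //; apply: measurableT_comp => //; exact: measurable_funM.
move=> x _; rewrite /= lee_fin normr1 ger0_norm ?expR_ge0 // -expR0 ler_expR.
by rewrite oppr_le0 c_eq; apply: mulr_ge0 (mulr_ge0 a_ge0 (expR_ge0 _)) (expR_ge0 _).
Qed.

Lemma lognormal_laplace_le : lognormal_laplace c s <= expR (- a * (1 + w / 2)).
Proof.
have g_le x : expR (- (c * expR (s * x))) <= 1 * expR (- a * (1 + w) + (- t) * x).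
  have -> : - a * (1 + w) + (- t) * x = - (a * (1 + (w + s * x))) by field.
  rewrite mul1r ler_expR lerN2 c_eq -(mulrA a) -expRD.
  by apply: ler_wpM2l => //; exact: expR_ge1Dx.
apply: le_trans (le_std_gauss_expect lognormal_laplace_integrable
  (std_gauss_integrable_expR_affine _ _ _) g_le) _.
rewrite std_gauss_expect_expR_affine mul1r ler_expR le_eqVlt.
by apply/predU1P; left; field.
Qed.

Lemma lognormal_laplace_minorant (e x : R) : 0 < e ->
  (1 + M + t / e) * expR (- M - t ^+ 2 + (- t) * x)
  - a * expR (- M + (s - t) * t + (s - t) * x)
  - t / e * expR (- M - (t + e) * t + (- (t + e)) * x)
  <= expR (- (c * expR (s * x))).
Proof.
move=> e_gt0; have e_neq0 := lt0r_neq0 e_gt0; pose y := x + t.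
pose Z := a * expR (s * y) + t / e * (expR (- (e * y)) - 1).
have c_shift : c * expR (s * x) = a * expR (s * y).
  by rewrite c_eq -mulrA -expRD /y; congr (_ * expR _); field.
have linear_le : - (t * y) <= t / e * (expR (- (e * y)) - 1).
  have -> : - (t * y) = t / e * (- (e * y)) by field; rewrite e_neq0 s_neq0.
  apply: ler_wpM2l; first by rewrite divr_ge0 // ltW.
  by have := expR_ge1Dx (- (e * y)); lra.
(* M is the mean of a e^{sy} under the law tilted by e^{-tx}: this is Jensen *)
have tangent : expR (- M) * (1 + M - Z) <= expR (- Z).
  by rewrite (_ : 1 + M - Z = 1 + (- Z - - M)); [exact: expR_tangent_le | ring].
have Z_le : expR (- Z) <= expR (- (a * expR (s * y) - t * y)).
  by rewrite ler_expR /Z; lra.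
have g_eq : expR (- (c * expR (s * x))) =
    expR (- (a * expR (s * y) - t * y)) * expR (- (t * y)).
  by rewrite -expRD c_shift; congr expR; ring.
have E0 : expR (- M - t ^+ 2 + (- t) * x) = expR (- M) * expR (- (t * y)).
  by rewrite -expRD /y; congr expR; ring.
have E1 : expR (- M + (s - t) * t + (s - t) * x) =
    expR (- M) * (expR (s * y) * expR (- (t * y))).
  by rewrite -!expRD /y; congr expR; ring.
have E2 : expR (- M - (t + e) * t + (- (t + e)) * x) =
    expR (- M) * (expR (- (e * y)) * expR (- (t * y))).
  by rewrite -!expRD /y; congr expR; ring.
rewrite E0 E1 E2 g_eq.
have -> : (1 + M + t / e) * (expR (- M) * expR (- (t * y)))
  - a * (expR (- M) * (expR (s * y) * expR (- (t * y))))
  - t / e * (expR (- M) * (expR (- (e * y)) * expR (- (t * y))))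
  = expR (- M) * (1 + M - Z) * expR (- (t * y)) by rewrite /Z; ring.
by apply: ler_wpM2r; [exact: expR_ge0 | exact: le_trans tangent Z_le].
Qed.

Lemma lognormal_laplace_ge_approx (e : R) : 0 < e ->
  expR (- a * (expR (s ^+ 2 / 2) + w / 2)) * (1 - t / e * (expR (e ^+ 2 / 2) - 1))
  <= lognormal_laplace c s.
Proof.
move=> e_gt0.
pose f0 (x : R) := (1 + M + t / e) * expR (- M - t ^+ 2 + (- t) * x).
pose f1 (x : R) := a * expR (- M + (s - t) * t + (s - t) * x).
pose f2 (x : R) := t / e * expR (- M - (t + e) * t + (- (t + e)) * x).
have i0 : P.-integrable setT (EFin \o f0) by exact: std_gauss_integrable_expR_affine.
have i1 : P.-integrable setT (EFin \o f1) by exact: std_gauss_integrable_expR_affine.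
have i2 : P.-integrable setT (EFin \o f2) by exact: std_gauss_integrable_expR_affine.
have := le_std_gauss_expect (f := fun x => f0 x - f1 x - f2 x)
  (std_gauss_integrableB (std_gauss_integrableB i0 i1) i2)
  lognormal_laplace_integrable (fun x => lognormal_laplace_minorant e x e_gt0).
apply: le_trans.
rewrite !std_gauss_expectB //; last exact: std_gauss_integrableB.
rewrite !std_gauss_expect_expR_affine.
set K := expR (- a * (expR (s ^+ 2 / 2) + w / 2)).
have E0 : expR (- M - t ^+ 2 + (- t) ^+ 2 / 2) = K.
  by congr expR; field.
have E1 : expR (- M + (s - t) * t + (s - t) ^+ 2 / 2) = K * expR (s ^+ 2 / 2).
  by rewrite -expRD; congr expR; field.
have E2 : expR (- M - (t + e) * t + (- (t + e)) ^+ 2 / 2) = K * expR (e ^+ 2 / 2).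
  by rewrite -expRD; congr expR; field.
rewrite E0 E1 E2 le_eqVlt.
by apply/predU1P; left; ring.
Qed.

Lemma lognormal_laplace_ge :
  expR (- a * (expR (s ^+ 2 / 2) + w / 2)) <= lognormal_laplace c s.
Proof.
set K := expR _.
apply: (@le_of_forall_subM_le _ _ _ (K * t * expR (1 / 2))) => e e_gt0 e_le1.
apply: le_trans _ (lognormal_laplace_ge_approx e e_gt0).
have expm1_le : expR (e ^+ 2 / 2) - 1 <= e ^+ 2 / 2 * expR (1 / 2).
  have := expR_tangent_le 0 (e ^+ 2 / 2); rewrite expR0.
  have : expR (e ^+ 2 / 2) <= expR (1 / 2).
    by rewrite ler_expR ler_pM2r // expr_le1 // ltW.
  have : 0 <= e ^+ 2 / 2 by rewrite divr_ge0 // sqr_ge0.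
  nra.
have err_le : t / e * (expR (e ^+ 2 / 2) - 1) <= t * expR (1 / 2) * e.
  apply: le_trans (ler_wpM2l _ expm1_le) _; first by rewrite divr_ge0 // ltW.
  rewrite (_ : t / e * _ = t * expR (1 / 2) * e / 2); last first.
    by field; rewrite (lt0r_neq0 e_gt0) s_neq0.
  have : 0 <= t * expR (1 / 2) * e.
    by apply: mulr_ge0; [exact: mulr_ge0 t_ge0 (expR_ge0 _) | exact: ltW].
  lra.
have := ler_wpM2l (expR_ge0 _ : 0 <= K) err_le.
rewrite -/K; lra.
Qed.

Lemma lognormal_laplace_gt0 : 0 < lognormal_laplace c s.
Proof. exact: lt_le_trans (expR_gt0 _) lognormal_laplace_ge. Qed.

End lognormal_laplace_bounds.

Lemma LambertWP {R : realType} (y : R) : 0 < y ->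
  0 < LambertW y /\ LambertW y * expR (LambertW y) = y.
Proof.
move=> y_gt0.
have [w w0y wexpw] : exists2 w : R, w \in `[0, y] & w * expR w = y.
  have cont : continuous (fun w : R => w * expR w).
    by move=> x; apply: (@continuousM _ _ id expR x) => //; exact: continuous_expR.
  apply: IVT; [exact: ltW | exact: continuous_subspaceT |].
  rewrite mul0r; apply/andP; split; first by rewrite ge_min ltW.
  by rewrite le_max; apply/orP; right; have := expR_ge1Dx y; nra.
have ex_w : exists v : R, -1 < v /\ v * expR v = y.
  exists w; split => //; move: w0y; rewrite in_itv /= => /andP[w_ge0 _].
  exact: lt_le_trans (ltrN10 _) w_ge0.
have [_ Wexp] := xgetPex 0 ex_w.
by split => //; rewrite -(pmulr_lgt0 _ (expR_gt0 (LambertW y))) Wexp.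
Qed.

Lemma le_value_fun {R : realType} (T r mu sigma gamma x0 : R) : 0 < gamma ->
  {homo value_fun T r mu sigma gamma x0 : X Y / X <= Y}.
Proof.
move=> gamma_gt0 X Y XY; rewrite /value_fun !mulNr lerN2.
apply: ler_wpM2l; first by rewrite divr_ge0 // ltW.
rewrite ler_expR lerD2r lerN2.
by apply: ler_wpM2l; [rewrite mulr_ge0 ?expR_ge0 // ltW | rewrite lerD2l].
Qed.

Section price_bounds.
Context {R : realType}.
Variables (T r nu mu eta sigma rho s0 lambda gamma : R).
Hypotheses (T_gt0 : 0 < T) (eta_gt0 : 0 < eta) (rho_gtN1 : -1 < rho) (rho_lt1 : rho < 1).
Hypotheses (s0_gt0 : 0 < s0) (lambda_gt0 : 0 < lambda) (gamma_gt0 : 0 < gamma).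
Local Notation c := (theta lambda gamma rho * s0 * expR (drift nu eta rho mu r sigma * T)).
Local Notation s := (eta * Num.sqrt T).
Local Notation w := (w_Lambert T r nu mu eta sigma rho s0 lambda gamma).
Local Notation K := (expR (- r * T) / (gamma * (1 - rho ^+ 2))).

Let rho2_lt1 : 0 < 1 - rho ^+ 2. Proof. by move: rho_gtN1 rho_lt1 => ? ?; nra. Qed.

Let s_gt0 : 0 < s. Proof. by rewrite mulr_gt0 // sqrtr_gt0. Qed.

Let s2 : s ^+ 2 = eta ^+ 2 * T. Proof. by rewrite exprMn sqr_sqrtr // ltW. Qed.

Let K_ge0 : 0 <= K. Proof. by rewrite divr_ge0 ?expR_ge0 // mulr_ge0 // ltW. Qed.

Lemma w_Lambert_spec : 0 < w /\ w * expR w = c * s ^+ 2.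
Proof.
rewrite s2 /w_Lambert (_ : _ * theta _ _ _ = c * (eta ^+ 2 * T)); last by ring.
by apply: LambertWP; rewrite !mulr_gt0 ?expR_gt0 ?exprn_gt0.
Qed.

Lemma price_lognormal_laplace :
  price T r nu mu eta sigma rho s0 lambda gamma = K * - ln (lognormal_laplace c s).
Proof. by rewrite mulrN -mulNr. Qed.

Lemma D_bound_le_price :
  D_bound T r nu mu eta sigma rho s0 lambda gamma <=
  price T r nu mu eta sigma rho s0 lambda gamma.
Proof.
have [w_gt0 wexpw] := w_Lambert_spec.
have lnL_le : ln (lognormal_laplace c s) <= - (w / s ^+ 2) * (1 + w / 2).
  rewrite -ler_expR lnK ?posrE ?(lognormal_laplace_gt0 s_gt0 (ltW w_gt0) wexpw) //.
  exact: lognormal_laplace_le s_gt0 (ltW w_gt0) wexpw.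
rewrite price_lognormal_laplace.
have -> : D_bound T r nu mu eta sigma rho s0 lambda gamma =
    K * (w / s ^+ 2 * (1 + w / 2)).
  by rewrite /D_bound s2 /theta; field; rewrite !gt_eqF.
by apply: ler_wpM2l => //; lra.
Qed.

Lemma price_le_G_bound :
  price T r nu mu eta sigma rho s0 lambda gamma <=
  G_bound T r nu mu eta sigma rho s0 lambda gamma.
Proof.
have [w_gt0 wexpw] := w_Lambert_spec.
have lnL_ge : - (w / s ^+ 2) * (expR (s ^+ 2 / 2) + w / 2) <= ln (lognormal_laplace c s).
  rewrite -ler_expR lnK ?posrE ?(lognormal_laplace_gt0 s_gt0 (ltW w_gt0) wexpw) //.
  exact: lognormal_laplace_ge s_gt0 (ltW w_gt0) wexpw.
rewrite price_lognormal_laplace.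
have -> : G_bound T r nu mu eta sigma rho s0 lambda gamma =
    K * (w / s ^+ 2 * (expR (s ^+ 2 / 2) + w / 2)).
  rewrite /G_bound s2 /theta [_ / 2 * T]mulrAC.
  by field; rewrite !gt_eqF.
by apply: ler_wpM2l => //; lra.
Qed.

End price_bounds.

Theorem theorem4 (R : realType) (T r nu mu x0 eta sigma rho s0 lambda gamma : R) :
  0 < T -> 0 < eta -> 0 < sigma -> -1 < rho -> rho < 1 ->
  0 < s0 -> 0 < lambda -> 0 < gamma ->
  let p := price T r nu mu eta sigma rho s0 lambda gamma in
  let D := D_bound T r nu mu eta sigma rho s0 lambda gamma in
  let G := G_bound T r nu mu eta sigma rho s0 lambda gamma in
  (D <= p /\ p <= G) /\
  (value_fun T r mu sigma gamma x0 D <= value_fun T r mu sigma gamma x0 p /\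
   value_fun T r mu sigma gamma x0 p <= value_fun T r mu sigma gamma x0 G).
Proof.
move=> T_gt0 eta_gt0 _ rho_gtN1 rho_lt1 s0_gt0 lambda_gt0 gamma_gt0 p D G.
have Dp : D <= p by exact: D_bound_le_price.
have pG : p <= G by exact: price_le_G_bound.
by split => //; split; exact: le_value_fun.
Qed.
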